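(* Consider the fully discrete variable-step DLN scheme (with parameter $\theta\in[0,1]$) for the unsteady Stokes/Darcy model described in the context, on an arbitrary partition $0=t_0<\dots<t_N=T$, with given starting values $\underline{u}_h^0,\underline{u}_h^1\in\mathbf{V}_h$. Then for every $2\le M\le N$ the approximate solutions satisfy $$\tfrac14(1+\theta)\|\underline{u}_h^M\|_0^2+\tfrac14(1-\theta)\|\underline{u}_h^{M-1}\|_0^2+\sum_{n=1}^{M-1}\Big\|\sum_{j=0}^2\lambda_{j,n}\underline{u}_h^{n-1+j}\Big\|_0^2+C(\theta)\sum_{n=1}^{M-1}(k_n+k_{n-1})\|\underline{u}_{h,\beta}^n\|_{\mathbf U}^2$$ $$\le \tfrac14(1+\theta)\|\underline{u}_h^1\|_0^2+\tfrac14(1-\theta)\|\underline{u}_h^0\|_0^2+\widetilde C(\theta)\sum_{n=1}^{N-1}(k_n+k_{n-1})\|\mathbf F_\beta^n\|_{\mathbf U'}^2,$$ where $C(\theta),\widetilde C(\theta)\ge0$ are constants independent of the mesh size $h$ and the step sizes $k_n$.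
   Context: Domain: $\Omega=\Omega_f\cup\Omega_p\subset\mathbb{R}^d$ with fluid region $\Omega_f$, porous region $\Omega_p$, interface $\Gamma=\overline\Omega_f\cap\overline\Omega_p$, a unit normal $\mathbf n_s$ on $\Gamma$. Parameters: $\nu>0$, gravity $g>0$, storativity $S_0>0$, symmetric positive definite hydraulic conductivity $\mathbf K$, $\mu_{BJS}>0$, permeability $\Pi$ with $\mathbf K=\Pi g/\nu$. Spaces: $H_f=\{\mathbf v\in (H^1(\Omega_f))^d:\mathbf v=0 \text{ on }\partial\Omega_f\setminus\Gamma\}$, $H_p=\{\psi\in H^1(\Omega_p):\psi=0\text{ on }\partial\Omega_p\setminus\Gamma\}$, $\mathbf U=H_f\times H_p$, $Q_f=L^2(\Omega_f)$. For $\underline v=(\mathbf v,\psi)$, $\underline u=(\mathbf u,\phi)\in\mathbf U$: $\langle\underline u,\underline v\rangle_0=(\mathbf u,\mathbf v)_{\Omega_f}+gS_0(\phi,\psi)_{\Omega_p}$, $\|\underline v\|_0^2=\langle\underline v,\underline v\rangle_0$, $\|\underline v\|_{\mathbf U}^2=\nu(\nabla\mathbf v,\nabla\mathbf v)_{\Omega_f}+g(\mathbf K\nabla\psi,\nabla\psi)_{\Omega_p}$; $\mathbf U'$ the dual with $\|\mathbf F\|_{\mathbf U'}=\sup_{\underline v\ne0}\langle\mathbf F,\underline v\rangle_{\mathbf U'}/\|\underline v\|_{\mathbf U}$, where for $\mathbf F=(\mathbf F_1,F_2)$, $\langle \mathbf F,\underline v\rangle_{\mathbf U'}=(\mathbf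 F_1,\mathbf v)_{\Omega_f}+g(F_2,\psi)_{\Omega_p}$. Bilinear forms: $a(\underline u,\underline v)=\nu(\mathbb D(\mathbf u),\mathbb D(\mathbf v))_{\Omega_f}+\big(\frac{\mu_{BJS}\nu\sqrt d}{\sqrt{\mathrm{trace}(\Pi)}}P_\tau\mathbf u,\mathbf v\big)_\Gamma+g(\mathbf K\nabla\phi,\nabla\psi)_{\Omega_p}+g(\phi,\mathbf v\cdot\mathbf n_s)_\Gamma-g(\psi,\mathbf u\cdot\mathbf n_s)_\Gamma$, with $\mathbb D(\mathbf u)=\frac12(\nabla\mathbf u+\nabla\mathbf u^{T})$, $P_\tau\mathbf v=\mathbf v-(\mathbf v\cdot\mathbf n_s)\mathbf n_s$; $b(\underline v,q)=-(q,\nabla\cdot\mathbf v)_{\Omega_f}$. The paper asserts $a$ is continuous and coercive on $\mathbf U$: $a(\underline u,\underline u)\ge C_2\|\underline u\|_{\mathbf U}^2$. Discretization: finite element spaces $H_{fh}\subset H_f$, $Q_{fh}\subset Q_f$ (discrete inf-sup stable pair), $H_{ph}\subset H_p$, $\mathbf U_h=H_{fh}\times H_{ph}$, $V_{fh}=\{\mathbf v_h\in H_{fh}:(\nabla\cdot\mathbf v_h,q_h)=0\ \forall q_h\in Q_{fh}\}$, $\mathbf V_h=V_{fh}\times H_{ph}$. Time grid: $k_n=t_{n+1}-t_n$, $\epsilon_n=\frac{k_n-k_{n-1}}{k_n+k_{n-1}}$. DLN coefficients: $\alpha_2=\frac{1+\theta}{2}$, $\alpha_1=-\theta$, $\alpha_0=\frac{\theta-1}{2}$;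 $\beta_{2,n}=\frac14\big(1+\frac{1-\theta^2}{(1+\epsilon_n\theta)^2}+\epsilon_n^2\frac{\theta(1-\theta^2)}{(1+\epsilon_n\theta)^2}+\theta\big)$, $\beta_{1,n}=\frac12\big(1-\frac{1-\theta^2}{(1+\epsilon_n\theta)^2}\big)$, $\beta_{0,n}=\frac14\big(1+\frac{1-\theta^2}{(1+\epsilon_n\theta)^2}-\epsilon_n^2\frac{\theta(1-\theta^2)}{(1+\epsilon_n\theta)^2}-\theta\big)$; $\lambda_{1,n}=-\frac{\sqrt{\theta(1-\theta^2)}}{\sqrt2(1+\epsilon_n\theta)}$, $\lambda_{2,n}=-\frac{1-\epsilon_n}{2}\lambda_{1,n}$, $\lambda_{0,n}=-\frac{1+\epsilon_n}{2}\lambda_{1,n}$. Notation: $\underline u_{h,\beta}^n=\sum_{j=0}^2\beta_{j,n}\underline u_h^{n-1+j}$, $\mathbf F_\beta^n=\sum_{j=0}^2\beta_{j,n}\mathbf F(t_{n-1+j})$ for a given source $\mathbf F\in L^2(0,T;\mathbf U')$. Scheme: for $n=1,\dots,N-1$, find $\underline u_h^{n+1}\in\mathbf V_h$ such that for all $\underline v_h\in\mathbf V_h$: $\big\langle\frac{\alpha_2\underline u_h^{n+1}+\alpha_1\underline u_h^n+\alpha_0\underline u_h^{n-1}}{\alpha_2k_n-\alpha_0k_{n-1}},\underline v_h\big\rangle_0+a(\underline u_{h,\beta}^n,\underline v_h)=\langle\mathbf F_\beta^n,\underline v_h\rangle_{\mathbf U'}$. *)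

From mathcomp Require Import all_boot all_order all_algebra all_classical all_reals.
Import Order.TTheory GRing.Theory Num.Theory.
Set Implicit Arguments. Unset Strict Implicit. Unset Printing Implicit Defensive.
Local Open Scope ring_scope.
Local Open Scope classical_set_scope.

Section DLN.
Variable R : realType.

Definition dln_alpha (theta : R) (j : nat) : R :=
  match j with
  | 0 => (theta - 1) / 2
  | 1 => - theta
  | _ => (1 + theta) / 2
  end.

Definition dln_beta (theta eps : R) (j : nat) : R :=
  let q := (1 - theta ^+ 2) / (1 + eps * theta) ^+ 2 in
  match j with
  | 0 => (1 + q - eps ^+ 2 * theta * q - theta) / 4
  | 1 => (1 - q) / 2
  | _ => (1 + q + eps ^+ 2 * theta * q + theta) / 4
  end.

Definition dln_lambda1 (theta eps : R) : R :=
  - Num.sqrt (theta * (1 - theta ^+ 2)) / (Num.sqrt 2 * (1 + eps * theta)).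

Definition dln_lambda (theta eps : R) (j : nat) : R :=
  match j with
  | 0 => - (1 + eps) / 2 * dln_lambda1 theta eps
  | 1 => dln_lambda1 theta eps
  | _ => - (1 - eps) / 2 * dln_lambda1 theta eps
  end.

Definition step (t : nat -> R) (n : nat) : R := t n.+1 - t n.
Definition eps_n (t : nat -> R) (n : nat) : R :=
  (step t n - step t n.-1) / (step t n + step t n.-1).

Variable U : lmodType R.

Definition bilin_form (f : U -> U -> R) : Prop :=
  (forall (c : R) (x y z : U), f (c *: x + y) z = c * f x z + f y z) /\
  (forall (c : R) (x y z : U), f z (c *: x + y) = c * f z x + f z y).

Definition symm_bilin (f : U -> U -> R) : Prop := forall x y, f x y = f y x.

Definition linear_functional (F : U -> R) : Prop :=
  forall (c : R) (x y : U), F (c *: x + y) = c * F x + F y.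

Definition form_norm (f : U -> U -> R) (v : U) : R := Num.sqrt (f v v).

Definition dual_norm (nU : U -> U -> R) (F : U -> R) : R :=
  sup [set F v / form_norm nU v | v in [set v : U | v <> 0]].

Definition subspace (V : U -> Prop) : Prop :=
  V 0 /\ forall (c : R) (x y : U), V x -> V y -> V (c *: x + y).

Definition dln_comb (c : nat -> R) (u : nat -> U) (n : nat) : U :=
  \sum_(j < 3) c j *: u (n.-1 + j)%N.

Definition dln_src (c : nat -> R) (F : R -> U -> R) (t : nat -> R) (n : nat)
  : U -> R :=
  fun v => \sum_(j < 3) c j * F (t (n.-1 + j)%N) v.

End DLN.

From mathcomp Require Import all_boot all_order all_algebra all_classical all_reals.
From mathcomp Require Import ring lra zify.
Import Order.TTheory GRing.Theory Num.Theory.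
Set Implicit Arguments. Unset Strict Implicit. Unset Printing Implicit Defensive.
Local Open Scope ring_scope.

(* Testing the scheme with the β-combination u_β^n, the identity of the DLN
   coefficients [gram3_dln_alpha_beta] (G-stability) rewrites
   <Σ_j α_j u^{n-1+j}, u_β^n>_0 as E(n+1) - E(n) + ‖Σ_j λ_{j,n} u^{n-1+j}‖_0^2,
   with E(k) = (1+θ)/4 ‖u^k‖_0^2 + (1-θ)/4 ‖u^{k-1}‖_0^2.  The step weight
   α_2 k_n - α_0 k_{n-1} lies between (1-θ)/2 (k_n + k_{n-1}) and k_n + k_{n-1},
   so coercivity of a and Young's inequality absorb the source, and summing over
   n telescopes.  This gives C(θ) = C_2 (1-θ)/4 and C~(θ) = 1/(2 C_2). *)

Section BilinearForms.
Variables (R : realType) (U : lmodType R) (f : U -> U -> R).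
Hypothesis f_bilin : bilin_form f.

Lemma form0l z : f 0 z = 0.
Proof. by have := f_bilin.1 1 0 0 z; rewrite scale1r addr0 mul1r; lra. Qed.

Lemma form0r z : f z 0 = 0.
Proof. by have := f_bilin.2 1 0 0 z; rewrite scale1r addr0 mul1r; lra. Qed.

Lemma formDl z : {morph f^~ z : x y / x + y}.
Proof. by move=> x y; have := f_bilin.1 1 x y z; rewrite scale1r mul1r. Qed.

Lemma formDr z : {morph f z : x y / x + y}.
Proof. by move=> x y; have := f_bilin.2 1 x y z; rewrite scale1r mul1r. Qed.

Lemma formZl c x z : f (c *: x) z = c * f x z.
Proof. by have := f_bilin.1 c x 0 z; rewrite !addr0 form0l addr0. Qed.

Lemma formZr c x z : f z (c *: x) = c * f z x.
Proof. by have := f_bilin.2 c x 0 z; rewrite !addr0 form0r addr0. Qed.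

Lemma form_sum_scale k (c d : 'I_k -> R) (x : 'I_k -> U) :
  f (\sum_i c i *: x i) (\sum_j d j *: x j)
  = \sum_i \sum_j c i * d j * f (x i) (x j).
Proof.
rewrite (big_morph _ (formDl _) (form0l _)); apply: eq_bigr => i _.
rewrite formZl (big_morph _ (formDr _) (form0r _)) mulr_sumr.
by apply: eq_bigr => j _; rewrite formZr mulrA.
Qed.

Hypothesis f_pos : forall v, v <> 0 -> 0 < f v v.

Lemma form_ge0 v : 0 <= f v v.
Proof. by have [->|/eqP/f_pos/ltW//] := eqVneq v 0; rewrite form0l. Qed.

Lemma sqr_form_norm v : form_norm f v ^+ 2 = f v v.
Proof. exact/sqr_sqrtr/form_ge0. Qed.

Lemma le_dual_norm (G : U -> R) (c : R) : linear_functional G ->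
  (forall v, `|G v| <= c * form_norm f v) ->
  forall v, G v <= dual_norm f G * form_norm f v.
Proof.
move=> G_lin G_bnd v; have [->|/eqP v0] := eqVneq v 0.
  have -> : G 0 = 0 by have := G_lin 1 0 0; rewrite scale1r addr0 mul1r; lra.
  by rewrite /form_norm form0l sqrtr0 mulr0.
have norm_gt0 w : w <> 0 -> 0 < form_norm f w by move=> /f_pos; rewrite sqrtr_gt0.
rewrite -ler_pdivrMr ?norm_gt0 //; apply: sup_upper_bound; last by exists v.
split; first by exists (G v / form_norm f v), v.
exists c => _ [w /= w0 <-]; rewrite ler_pdivrMr ?norm_gt0 //.
exact: le_trans (ler_norm _) (G_bnd w).
Qed.

End BilinearForms.

Section DLNScalars.
Variable R : realType.

Definition gram3 (c d : nat -> R) (g : nat -> nat -> R) : R :=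
  \sum_(i < 3) \sum_(j < 3) c i * d j * g i j.

Lemma gram3E c d g : gram3 c d g =
  c 0 * (d 0 * g 0 0 + d 1 * g 0 1 + d 2 * g 0 2)
  + c 1 * (d 0 * g 1 0 + d 1 * g 1 1 + d 2 * g 1 2)
  + c 2 * (d 0 * g 2 0 + d 1 * g 2 1 + d 2 * g 2 2).
Proof. rewrite /gram3 !big_ord_recl !big_ord0 /bump /=; ring. Qed.

Lemma sqr_dln_lambda1 (theta eps : R) : 0 <= theta <= 1 -> 1 + eps * theta != 0 ->
  dln_lambda1 theta eps ^+ 2
  = theta * (1 - theta ^+ 2) / (2 * (1 + eps * theta) ^+ 2).
Proof.
move=> /andP[th0 th1] nz.
have hs : Num.sqrt (theta * (1 - theta ^+ 2)) ^+ 2 = theta * (1 - theta ^+ 2).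
  by apply/sqr_sqrtr/mulr_ge0 => //; nra.
have h2 : Num.sqrt (2 : R) ^+ 2 = 2 by apply: sqr_sqrtr; lra.
have s2 : Num.sqrt (2 : R) != 0 by rewrite gt_eqF // sqrtr_gt0; lra.
by rewrite /dln_lambda1 -{2}hs -{2}h2; field; rewrite s2 nz.
Qed.

Lemma gram3_dln_alpha_beta (theta eps : R) (g : nat -> nat -> R) :
  0 <= theta <= 1 -> 1 + eps * theta != 0 -> (forall i j, g i j = g j i) ->
  gram3 (dln_alpha theta) (dln_beta theta eps) g
  = ((1 + theta) / 4 * g 2 2 + (1 - theta) / 4 * g 1 1)
    - ((1 + theta) / 4 * g 1 1 + (1 - theta) / 4 * g 0 0)
    + gram3 (dln_lambda theta eps) (dln_lambda theta eps) g.
Proof.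
move=> th nz gC.
(* λ_j = λ_1 μ_j, so λ_1 only enters squared, and λ_1^2 is rational in θ, ε. *)
pose mu j : R := match j with 0 => - (1 + eps) / 2 | 1 => 1 | _ => - (1 - eps) / 2 end.
have -> : gram3 (dln_lambda theta eps) (dln_lambda theta eps) g
          = dln_lambda1 theta eps ^+ 2 * gram3 mu mu g.
  by rewrite !gram3E /dln_lambda /=; ring.
rewrite sqr_dln_lambda1 // !gram3E /dln_alpha /dln_beta /=.
rewrite (gC 1%N 0%N) (gC 2%N 0%N) (gC 2%N 1%N); field.
by rewrite nz.
Qed.

Lemma dln_eps_theta_gt0 (theta kn kp : R) : 0 <= theta <= 1 ->
  0 < kn -> 0 < kp -> 0 < 1 + (kn - kp) / (kn + kp) * theta.
Proof.
move=> /andP[th0 th1] kn_gt0 kp_gt0.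
have -> : 1 + (kn - kp) / (kn + kp) * theta
          = (kn * (1 + theta) + kp * (1 - theta)) / (kn + kp) by field; lra.
by apply: divr_gt0; nra.
Qed.

Lemma young_absorb (c x y : R) : 0 < c ->
  x * y - c * y ^+ 2 <= (2 * c)^-1 * x ^+ 2 - c / 2 * y ^+ 2.
Proof.
move=> c0; rewrite -subr_ge0.
have -> : (2 * c)^-1 * x ^+ 2 - c / 2 * y ^+ 2 - (x * y - c * y ^+ 2)
          = (2 * c)^-1 * (x - c * y) ^+ 2 by field; lra.
by rewrite mulr_ge0 ?sqr_ge0 // invr_ge0; lra.
Qed.

Lemma dln_energy_step_bound (C2 theta kn kp P A G dn s : R) :
  0 < C2 -> 0 <= theta <= 1 -> 0 < kn -> 0 < kp ->
  ((1 + theta) / 2 * kn + (1 - theta) / 2 * kp)^-1 * P + A = G ->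
  C2 * s ^+ 2 <= A -> G <= dn * s ->
  P + C2 * (1 - theta) / 4 * ((kn + kp) * s ^+ 2)
  <= (2 * C2)^-1 * ((kn + kp) * dn ^+ 2).
Proof.
move=> C2_gt0 /andP[th0 th1] kn_gt0 kp_gt0 hE hA hG.
set D := (1 + theta) / 2 * kn + (1 - theta) / 2 * kp in hE.
have D_gt0 : 0 < D by rewrite /D; nra.
have -> : P = D * (G - A) by rewrite -hE addrK mulrA divff ?mul1r ?gt_eqF.
have hGA : G - A <= (2 * C2)^-1 * dn ^+ 2 - C2 / 2 * s ^+ 2.
  by have := young_absorb dn s C2_gt0; lra.
set X := (2 * C2)^-1 * dn ^+ 2 in hGA *.
set Y := C2 / 2 * s ^+ 2 in hGA *.
have X_ge0 : 0 <= X by rewrite mulr_ge0 ?sqr_ge0 // invr_ge0; lra.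
have Y_ge0 : 0 <= Y by rewrite mulr_ge0 ?sqr_ge0 //; lra.
have -> : C2 * (1 - theta) / 4 * ((kn + kp) * s ^+ 2) = (1 - theta) / 2 * (kn + kp) * Y.
  by rewrite /Y; field.
have -> : (2 * C2)^-1 * ((kn + kp) * dn ^+ 2) = (kn + kp) * X by rewrite /X; ring.
have := ler_wpM2l (ltW D_gt0) hGA.
have : D * X <= (kn + kp) * X by apply: ler_wpM2r => //; rewrite /D; nra.
have : (1 - theta) / 2 * (kn + kp) * Y <= D * Y.
  by apply: ler_wpM2r => //; rewrite /D; nra.
lra.
Qed.

End DLNScalars.

Section DLNCombinations.
Variables (R : realType) (U : lmodType R).

Definition dln_energy (f : U -> U -> R) (theta : R) (u : nat -> U) (k : nat) : R :=
  (1 + theta) / 4 * f (u k) (u k) + (1 - theta) / 4 * f (u k.-1) (u k.-1).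

Lemma form_dln_alpha_beta (f : U -> U -> R) (theta eps : R) (u : nat -> U) n :
  bilin_form f -> symm_bilin f -> 0 <= theta <= 1 -> 1 + eps * theta != 0 ->
  (1 <= n)%N ->
  f (dln_comb (dln_alpha theta) u n) (dln_comb (dln_beta theta eps) u n)
  = dln_energy f theta u n.+1 - dln_energy f theta u n
    + f (dln_comb (dln_lambda theta eps) u n) (dln_comb (dln_lambda theta eps) u n).
Proof.
move=> f_bilin f_sym th nz n_gt0.
rewrite /dln_comb !form_sum_scale //.
pose g i j := f (u (n.-1 + i)%N) (u (n.-1 + j)%N).
have := gram3_dln_alpha_beta (g := g) th nz.
by rewrite /gram3 /g /dln_energy /= addn0 addn1 addn2 prednK // => ->.
Qed.

Lemma subspace_dln_comb (V : U -> Prop) (c : nat -> R) (u : nat -> U) n :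
  subspace V -> (forall j, (j < 3)%N -> V (u (n.-1 + j)%N)) ->
  V (dln_comb c u n).
Proof.
case=> V0 V_lin u_in; rewrite /dln_comb; elim/big_ind: _ => //.
- by move=> x y Vx Vy; have := V_lin 1 x y Vx Vy; rewrite scale1r.
- by move=> j _; have := V_lin (c j) _ 0 (u_in j (ltn_ord j)) V0; rewrite addr0.
Qed.

Lemma linear_dln_src (b : nat -> R) (F : R -> U -> R) (t : nat -> R) n :
  (forall s, linear_functional (F s)) -> linear_functional (dln_src b F t n).
Proof.
move=> F_lin c x y; rewrite /dln_src mulr_sumr -big_split.
by apply: eq_bigr => j _; rewrite F_lin /=; ring.
Qed.

Lemma bounded_functional_sum (nU : U -> U -> R) (I : Type) (r : seq I)
    (b : I -> R) (G : I -> U -> R) :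
  (forall i, exists c, forall v, `|G i v| <= c * form_norm nU v) ->
  exists c, forall v, `|\sum_(i <- r) b i * G i v| <= c * form_norm nU v.
Proof.
move=> G_bnd; elim: r => [|i r [c Hc]].
  by exists 0 => v; rewrite big_nil normr0 mul0r.
have [ci Hci] := G_bnd i.
exists (`|b i| * ci + c) => v; rewrite big_cons mulrDl.
apply: le_trans (ler_normD _ _) _; apply: lerD (Hc v).
by rewrite normrM -mulrA ler_wpM2l.
Qed.

Lemma bounded_dln_src (nU : U -> U -> R) (b : nat -> R) (F : R -> U -> R)
    (t : nat -> R) n :
  (forall s, exists c, forall v, `|F s v| <= c * form_norm nU v) ->
  exists c, forall v, `|dln_src b F t n v| <= c * form_norm nU v.
Proof. by move=> F_bnd; apply: bounded_functional_sum => j; apply: F_bnd. Qed.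

End DLNCombinations.

Section DLNStability.
Variables (R : realType) (U : lmodType R) (ip0 nU a : U -> U -> R) (theta C2 : R).
Hypotheses (ip0_bilin : bilin_form ip0) (ip0_sym : symm_bilin ip0).
Hypotheses (nU_bilin : bilin_form nU) (nU_pos : forall v, v <> 0 -> 0 < nU v v).
Hypotheses (C2_gt0 : 0 < C2) (a_coercive : forall v, C2 * nU v v <= a v v).
Hypothesis theta01 : 0 <= theta <= 1.

Variables (Vh : U -> Prop) (N : nat) (t : nat -> R) (F : R -> U -> R) (u : nat -> U).
Hypotheses (Vh_subspace : subspace Vh) (t_incr : forall n, (n < N)%N -> t n < t n.+1).
Hypotheses (F_lin : forall s, linear_functional (F s))
  (F_bnd : forall s, exists c : R, forall v, `|F s v| <= c * form_norm nU v).
Hypothesis u_in : forall n, (n <= N)%N -> Vh (u n).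
Hypothesis scheme : forall n, (1 <= n)%N -> (n <= N.-1)%N ->
  forall v, Vh v ->
    ip0 ((dln_alpha theta 2 * step t n - dln_alpha theta 0 * step t n.-1)^-1
           *: dln_comb (dln_alpha theta) u n) v
    + a (dln_comb (dln_beta theta (eps_n t n)) u n) v
    = dln_src (dln_beta theta (eps_n t n)) F t n v.

Local Notation ubeta n := (dln_comb (dln_beta theta (eps_n t n)) u n).
Local Notation ulambda n := (dln_comb (dln_lambda theta (eps_n t n)) u n).
Local Notation Fbeta n := (dln_src (dln_beta theta (eps_n t n)) F t n).

Lemma step_gt0 n : (n < N)%N -> 0 < step t n.
Proof. by move=> /t_incr; rewrite subr_gt0. Qed.

Lemma step_pred_gt0 n : (0 < n < N)%N -> 0 < step t n.-1.
Proof. by case: n => // n /andP[_ /ltnW]; apply: step_gt0. Qed.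

Lemma dln_energy_step n : (0 < n < N)%N ->
  dln_energy ip0 theta u n.+1 - dln_energy ip0 theta u n + ip0 (ulambda n) (ulambda n)
  + C2 * (1 - theta) / 4 * ((step t n + step t n.-1) * form_norm nU (ubeta n) ^+ 2)
  <= (2 * C2)^-1 * ((step t n + step t n.-1) * dual_norm nU (Fbeta n) ^+ 2).
Proof.
move=> /[dup] nN /andP[n_gt0 n_ltN].
have kn_gt0 := step_gt0 n_ltN; have kp_gt0 := step_pred_gt0 nN.
have eps_nz : 1 + eps_n t n * theta != 0.
  by rewrite gt_eqF // /eps_n dln_eps_theta_gt0.
have ubeta_in : Vh (ubeta n).
  by apply: subspace_dln_comb => // j j3; apply: u_in; lia.
have n_le : (n <= N.-1)%N by lia.
have := scheme n_gt0 n_le ubeta_in.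
rewrite formZl // form_dln_alpha_beta // /dln_alpha /= => tested.
have [c Hc] := bounded_dln_src (dln_beta theta (eps_n t n)) t n F_bnd.
have Fbeta_le := le_dual_norm nU_bilin nU_pos (linear_dln_src _ t n F_lin) Hc.
apply: (dln_energy_step_bound C2_gt0 theta01 kn_gt0 kp_gt0 _ _ (Fbeta_le _)).
- by rewrite -tested; congr (_^-1 * _ + _); ring.
- by rewrite sqr_form_norm.
Qed.

Lemma dln_energy_estimate M : (2 <= M <= N)%N ->
  dln_energy ip0 theta u M + \sum_(1 <= n < M) ip0 (ulambda n) (ulambda n)
  + C2 * (1 - theta) / 4 * \sum_(1 <= n < M)
      (step t n + step t n.-1) * form_norm nU (ubeta n) ^+ 2
  <= dln_energy ip0 theta u 1 + (2 * C2)^-1 * \sum_(1 <= n < N)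
      (step t n + step t n.-1) * dual_norm nU (Fbeta n) ^+ 2.
Proof.
move=> /andP[M_ge2 M_leN].
have summed : \sum_(1 <= n < M)
    (dln_energy ip0 theta u n.+1 - dln_energy ip0 theta u n
     + ip0 (ulambda n) (ulambda n)
     + C2 * (1 - theta) / 4
       * ((step t n + step t n.-1) * form_norm nU (ubeta n) ^+ 2))
  <= \sum_(1 <= n < M)
     (2 * C2)^-1 * ((step t n + step t n.-1) * dual_norm nU (Fbeta n) ^+ 2).
  by apply: ler_sum_nat => n /andP[n_ge1 n_ltM]; apply: dln_energy_step; lia.
rewrite big_split big_split telescope_sumr ?(ltnW M_ge2) // -!mulr_sumr /= in summed.
have extend : \sum_(1 <= n < M) (step t n + step t n.-1) * dual_norm nU (Fbeta n) ^+ 2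
    <= \sum_(1 <= n < N) (step t n + step t n.-1) * dual_norm nU (Fbeta n) ^+ 2.
  rewrite (big_cat_nat (ltnW M_ge2) M_leN) /= lerDl big_nat_cond.
  apply: sumr_ge0 => n /andP[/andP[n_geM n_ltN] _].
  rewrite mulr_ge0 ?sqr_ge0 // addr_ge0 // ltW // ?step_gt0 ?step_pred_gt0 //; lia.
have Ct_ge0 : 0 <= (2 * C2)^-1 by rewrite invr_ge0 mulr_ge0 // ltW.
have := ler_wpM2l Ct_ge0 extend; lra.
Qed.

End DLNStability.

Theorem theorem4p1 (R : realType) (U : lmodType R)
  (ip0 nU a : U -> U -> R) (theta : R) :
  (* <.,.>_0 : symmetric positive definite bilinear form *)
  bilin_form ip0 -> symm_bilin ip0 ->
  (forall v, v <> 0 -> 0 < ip0 v v) ->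
  (* ||.||_U induced by a symmetric positive definite bilinear form *)
  bilin_form nU -> symm_bilin nU ->
  (forall v, v <> 0 -> 0 < nU v v) ->
  (* a : continuous and coercive bilinear form on U *)
  bilin_form a ->
  (exists Ca : R, forall u v,
      `|a u v| <= Ca * form_norm nU u * form_norm nU v) ->
  (exists C2 : R, 0 < C2 /\ forall u, C2 * nU u u <= a u u) ->
  0 <= theta <= 1 ->
  exists C Ct : R, 0 <= C /\ 0 <= Ct /\
  forall (Vh : U -> Prop) (N : nat) (t : nat -> R) (F : R -> U -> R)
         (u : nat -> U),
    subspace Vh ->
    t 0%N = 0 ->
    (forall n, (n < N)%N -> t n < t n.+1) ->
    (* F(t) in U' *)
    (forall s, linear_functional (F s)) ->
    (forall s, exists c : R, forall v, `|F s v| <= c * form_norm nU v) ->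
    (forall n, (n <= N)%N -> Vh (u n)) ->
    (* the DLN scheme, n = 1, ..., N-1 *)
    (forall n, (1 <= n)%N -> (n <= N.-1)%N ->
       forall v, Vh v ->
         ip0 ((dln_alpha theta 2 * step t n - dln_alpha theta 0 * step t n.-1)^-1
                *: dln_comb (dln_alpha theta) u n) v
         + a (dln_comb (dln_beta theta (eps_n t n)) u n) v
         = dln_src (dln_beta theta (eps_n t n)) F t n v) ->
    forall M : nat, (2 <= M)%N -> (M <= N)%N ->
      (1 + theta) / 4 * ip0 (u M) (u M)
      + (1 - theta) / 4 * ip0 (u M.-1) (u M.-1)
      + \sum_(1 <= n < M)
          ip0 (dln_comb (dln_lambda theta (eps_n t n)) u n)
              (dln_comb (dln_lambda theta (eps_n t n)) u n)
      + C * \sum_(1 <= n < M)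
          (step t n + step t n.-1)
          * form_norm nU (dln_comb (dln_beta theta (eps_n t n)) u n) ^+ 2
      <= (1 + theta) / 4 * ip0 (u 1%N) (u 1%N)
         + (1 - theta) / 4 * ip0 (u 0%N) (u 0%N)
         + Ct * \sum_(1 <= n < N)
             (step t n + step t n.-1)
             * dual_norm nU (dln_src (dln_beta theta (eps_n t n)) F t n) ^+ 2.
Proof.
move=> ip0_bilin ip0_sym _ nU_bilin _ nU_pos _ _ [C2 [C2_gt0 a_coercive]] theta01.
have /andP[_ theta_le1] := theta01.
exists (C2 * (1 - theta) / 4), (2 * C2)^-1; split; [|split].
- by rewrite divr_ge0 // mulr_ge0 ?subr_ge0 // ltW.
- by rewrite invr_ge0 mulr_ge0 ?ltW.
move=> Vh N t F u Vh_subspace _ t_incr F_lin F_bnd u_in scheme M M_ge2 M_leN.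
apply: (dln_energy_estimate ip0_bilin ip0_sym nU_bilin nU_pos C2_gt0 a_coercive
  theta01 Vh_subspace t_incr F_lin F_bnd u_in scheme).
by rewrite M_ge2.
Qed.
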